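(* $z_2(5,3)\ge 9$.
   Context: Double Zarankiewicz number: consider configurations $G=([m],[n],E_1\cup E_2)$ where $[m]=\{1,\dots,m\}$, $E_1\subseteq[m]\times[n]$ is a set of 1-edges (cells) and $E_2$ is a set of 2-edges $(i,j;k,l)$ with $i,k\in[m]$, $j,l\in[n]$, $i\ne k$, $j\ne l$; the cells $(i,j)$ and $(k,l)$ are the two halves of this 2-edge. Simplicity condition: the halves of all 2-edges are pairwise distinct cells and none of them belongs to $E_1$. A cell is occupied if it lies in $E_1$ or is a half of some 2-edge. $G$ contains a generalized $C_4$-cycle if (1) there are four 1-edges $(i,j),(i,l),(k,j),(k,l)\in E_1$ with $i\ne k$, $j\ne l$; or (2) there is a 2-edge $(i,j;k,l)\in E_2$ whose two opposite cells $(i,l)$ and $(k,j)$ are both occupied; or (3) there are a 2-edge $(i,j;p,q)\in E_2$ and a cell $(k,l)$ such that the five cells $(k,l),(k,j),(k,q),(i,l),(p,l)$ are pairwise distinct and all occupied. $z_2(m,n)$ is the maximum of $|E_1|+|E_2|$ over all such $G$ satisfying the simplicity condition and containing no generalized $C_4$-cycle. *)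

From mathcomp Require Import all_boot.
Set Implicit Arguments. Unset Strict Implicit. Unset Printing Implicit Defensive.

Definition cell (m n : nat) := ('I_m * 'I_n)%type.

(* A 2-edge (i,j;k,l) is represented as the pair of its halves ((i,j),(k,l)). *)
Definition edge2 (m n : nat) := (cell m n * cell m n)%type.

Section Config.
Variables (m n : nat).

Definition is_edge2 (e : edge2 m n) : bool := (e.1.1 != e.2.1) && (e.1.2 != e.2.2).

Definition is_half (c : cell m n) (e : edge2 m n) : bool := (c == e.1) || (c == e.2).

Definition simple_config (E1 : {set cell m n}) (E2 : {set edge2 m n}) : bool :=
  [forall e in E2, is_edge2 e] &&
  [forall e in E2, forall f in E2, forall c,
     (is_half c e && is_half c f) ==> (e == f)] &&
  [forall e in E2, (e.1 \notin E1) && (e.2 \notin E1)].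

Definition occupied (E1 : {set cell m n}) (E2 : {set edge2 m n}) (c : cell m n) : bool :=
  (c \in E1) || [exists e in E2, is_half c e].

Definition cycle1 (E1 : {set cell m n}) : bool :=
  [exists i : 'I_m, exists k : 'I_m, exists j : 'I_n, exists l : 'I_n,
    [&& i != k, j != l, (i, j) \in E1, (i, l) \in E1, (k, j) \in E1 & (k, l) \in E1]].

Definition cycle2 (E1 : {set cell m n}) (E2 : {set edge2 m n}) : bool :=
  [exists e in E2,
    occupied E1 E2 (e.1.1, e.2.2) && occupied E1 E2 (e.2.1, e.1.2)].

Definition cycle3 (E1 : {set cell m n}) (E2 : {set edge2 m n}) : bool :=
  [exists e in E2, exists c : cell m n,
    let: ((i, j), (p, q)) := e in
    let: (k, l) := c in
    let cs := [:: (k, l); (k, j); (k, q); (i, l); (p, l)] in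
    uniq cs && all (occupied E1 E2) cs].

Definition has_gen_C4 (E1 : {set cell m n}) (E2 : {set edge2 m n}) : bool := [|| cycle1 E1, cycle2 E1 E2 | cycle3 E1 E2].

Definition admissible (E1 : {set cell m n}) (E2 : {set edge2 m n}) : bool := simple_config E1 E2 && ~~ has_gen_C4 E1 E2.

End Config.

Definition z2 (m n : nat) : nat :=
  \max_(E1 : {set cell m n}) \max_(E2 : {set edge2 m n} | admissible E1 E2)
     (#|E1| + #|E2|).

From mathcomp Require Import all_boot.

Set Implicit Arguments.
Unset Strict Implicit.
Unset Printing Implicit Defensive.

(* The bound is attained by an explicit configuration on the 5 x 3 board with
   seven 1-edges and two 2-edges.  Membership in finite sets and quantifiers
   over finite types are sealed and do not evaluate, so admissibility of a
   configuration given by lists is restated with list quantifiers over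
   complete enumerations of the rows and columns, where it computes. *)

Lemma forall_in_seq_set (T : finType) (s : seq T) (P : pred T) :
  [forall x in [set:: s], P x] = all P s.
Proof. by apply/forall_inP/allP => Ps x sx; apply: Ps; rewrite ?inE in sx *. Qed.

Lemma exists_in_seq_set (T : finType) (s : seq T) (P : pred T) :
  [exists x in [set:: s], P x] = has P s.
Proof. by apply/exists_inP/hasP => -[x sx Px]; exists x; rewrite ?inE in sx *. Qed.

Lemma card_seq_set (T : finType) (s : seq T) : uniq s -> #|[set:: s]| = size s.
Proof. by move=> /card_uniqP <-; apply: eq_card => x; rewrite inE. Qed.

Section CompleteSeq.
Variables (T : finType) (s : seq T).
Hypothesis s_complete : forall x, x \in s.

Lemma forall_complete (P : pred T) : [forall x, P x] = all P s.
Proof. by apply/forallP/allP => Ps x //; apply: Ps. Qed.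

Lemma exists_complete (P : pred T) : [exists x, P x] = has P s.
Proof. by apply/existsP/hasP => [[x Px] | [x _ Px]]; exists x. Qed.

End CompleteSeq.

Section SeqConfig.
Variables (m n : nat) (rows : seq 'I_m) (cols : seq 'I_n).
Hypotheses (rows_complete : forall i, i \in rows) (cols_complete : forall j, j \in cols).
Variables (s1 : seq (cell m n)) (s2 : seq (edge2 m n)).

Let cells : seq (cell m n) := [seq (i, j) | i <- rows, j <- cols].

Let cells_complete (c : cell m n) : c \in cells.
Proof. by case: c => i j; apply/allpairsP; exists (i, j). Qed.

Definition occupied_seq (c : cell m n) := (c \in s1) || has (is_half c) s2.

Lemma occupied_seqE : occupied [set:: s1] [set:: s2] =1 occupied_seq.
Proof. by move=> c; rewrite /occupied /occupied_seq exists_in_seq_set inE. Qed.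

Definition simple_seq :=
  [&& all (@is_edge2 m n) s2,
      all (fun e => all (fun f =>
        all (fun c => (is_half c e && is_half c f) ==> (e == f)) cells) s2) s2
    & all (fun e => (e.1 \notin s1) && (e.2 \notin s1)) s2].

Lemma simple_config_seqE : simple_config [set:: s1] [set:: s2] = simple_seq.
Proof.
rewrite /simple_config /simple_seq !forall_in_seq_set -andbA; congr [&& _, _ & _].
  apply: eq_all => e; rewrite forall_in_seq_set; apply: eq_all => f.
  exact: forall_complete.
by apply: eq_all => e; rewrite !inE.
Qed.

Definition cycle1_seq :=
  has (fun i => has (fun k => has (fun j => has (fun l =>
    [&& i != k, j != l, (i, j) \in s1, (i, l) \in s1, (k, j) \in s1 & (k, l) \in s1])
  cols) cols) rows) rows.

Lemma cycle1_seqE : cycle1 [set:: s1] = cycle1_seq.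
Proof.
rewrite /cycle1 (exists_complete rows_complete); apply: eq_has => i.
rewrite (exists_complete rows_complete); apply: eq_has => k.
rewrite (exists_complete cols_complete); apply: eq_has => j.
by rewrite (exists_complete cols_complete); apply: eq_has => l; rewrite !inE.
Qed.

Definition cycle2_seq :=
  has (fun e => occupied_seq (e.1.1, e.2.2) && occupied_seq (e.2.1, e.1.2)) s2.

Lemma cycle2_seqE : cycle2 [set:: s1] [set:: s2] = cycle2_seq.
Proof. by rewrite /cycle2 exists_in_seq_set; apply: eq_has => e; rewrite !occupied_seqE. Qed.

Definition cycle3_seq :=
  has (fun e : edge2 m n => has (fun c : cell m n =>
    let: ((i, j), (p, q)) := e in
    let: (k, l) := c in
    let cs := [:: (k, l); (k, j); (k, q); (i, l); (p, l)] in
    uniq cs && all occupied_seq cs) cells) s2.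

Lemma cycle3_seqE : cycle3 [set:: s1] [set:: s2] = cycle3_seq.
Proof.
rewrite /cycle3 exists_in_seq_set; apply: eq_has => -[[i j] [p q]].
by rewrite (exists_complete cells_complete); apply: eq_has => -[k l]; rewrite (eq_all occupied_seqE).
Qed.

Lemma admissible_seqE :
  admissible [set:: s1] [set:: s2] = simple_seq && ~~ [|| cycle1_seq, cycle2_seq | cycle3_seq].
Proof.
by rewrite /admissible /has_gen_C4 simple_config_seqE cycle1_seqE cycle2_seqE cycle3_seqE.
Qed.

End SeqConfig.

Notation row i := (@Ordinal 5 i isT).
Notation col j := (@Ordinal 3 j isT).
Notation c i j := ((row i, col j) : cell 5 3).

Definition rows5 : seq 'I_5 := [:: row 0; row 1; row 2; row 3; row 4].
Definition cols3 : seq 'I_3 := [:: col 0; col 1; col 2].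

Lemma rows5_complete (i : 'I_5) : i \in rows5.
Proof. by case: i => [[|[|[|[|[|?]]]]] ?]. Qed.

Lemma cols3_complete (j : 'I_3) : j \in cols3.
Proof. by case: j => [[|[|[|?]]] ?]. Qed.

(* Rows 0..4 of the board, with 1-edges marked # and the halves of the two
   2-edges marked a and b:
     . b #
     # a #
     a . #
     b # .
     # # .   *)
Definition witness1 : seq (cell 5 3) :=
  [:: c 1 2; c 4 1; c 0 2; c 1 0; c 4 0; c 3 1; c 2 2].
Definition witness2 : seq (edge2 5 3) := [:: (c 1 1, c 2 0); (c 0 1, c 3 0)].

Lemma witness_admissible : admissible [set:: witness1] [set:: witness2].
Proof. by rewrite (admissible_seqE rows5_complete cols3_complete); vm_compute. Qed.

Lemma witness_size : #|[set:: witness1]| + #|[set:: witness2]| = 9.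
Proof. by rewrite !card_seq_set. Qed.

Theorem theorem4p1 : 9 <= z2 5 3.
Proof.
rewrite /z2 -witness_size.
apply: leq_trans (leq_bigmax [set:: witness1]).
exact: leq_bigmax_cond witness_admissible.
Qed.
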